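(* Let $(A,E)$ be the direct producted noncommutative probability space over $D_N$ of noncommutative probability spaces $(A_1,\varphi_1),\dots,(A_N,\varphi_N)$. For $j=1,\dots,N$ let $A_j'=\{(0,\dots,0,a_j,0,\dots,0):a_j\in A_j\}\subset A$ be the embedding of $A_j$ into the $j$-th coordinate. Then $A_1',\dots,A_N'$ are free over $D_N$ in $(A,E)$.
   Context: Each $(A_j,\varphi_j)$ is a unital complex algebra with a linear functional. $A=\times_{j=1}^N A_j$ with componentwise operations; $D_N=\mathbb{C}^N$ with componentwise operations, identified with the central subalgebra $\{(\alpha_1 1,\dots,\alpha_N 1)\}$ of $A$; $E((a_1,\dots,a_N))=(\varphi_1(a_1),\dots,\varphi_N(a_N))$. $D_N$-valued cumulants: $k_n(y_1,\dots,y_n)=\sum_{\pi\in NC(n)}\prod_{V\in\pi}E(\prod_{l\in V}y_l)\,\mu(\pi,1_n)$. Subsets $S_1,\dots,S_N$ of $A$ are free over $D_N$ if all mixed $D_N$-valued cumulants of elements of the algebras generated by $S_i\cup D_N$ vanish. *)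

From HB Require Import structures.
From mathcomp Require Import all_boot all_order all_algebra.
From mathcomp Require Import reals complex.
Set Implicit Arguments. Unset Strict Implicit. Unset Printing Implicit Defensive.
Import Order.TTheory GRing.Theory Num.Theory.
Local Open Scope ring_scope.

Definition is_set_partition (n : nat) (P : {set {set 'I_n}}) : bool :=
  partition P [set: 'I_n].

Definition noncrossing (n : nat) (P : {set {set 'I_n}}) : bool :=
  [forall V in P, forall W in P, (V != W) ==>
     [forall a : 'I_n, forall b : 'I_n, forall c : 'I_n, forall d : 'I_n,
        ~~ [&& (a < b)%N, (b < c)%N, (c < d)%N,
               a \in V, c \in V, b \in W & d \in W]]].

Definition NC (n : nat) : {pred {set {set 'I_n}}} :=
  [pred P | is_set_partition P && noncrossing P].

Definition refines (n : nat) (pi sigma : {set {set 'I_n}}) : bool :=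
  [forall V in pi, exists W in sigma, V \subset W].

Definition one_part (n : nat) : {set {set 'I_n}} := [set [set: 'I_n]].

(** The fuel k bounds the length of chains; #|T| fuel suffices. *)
Fixpoint mob_fuel (T : finType) (S : {pred T}) (le : rel T) (k : nat) (x y : T)
  : int :=
  if x == y then 1 else
  match k with
  | 0 => 0
  | k'.+1 =>
      if (x \in S) && (y \in S) && le x y then
        - \sum_(z : T | [&& z \in S, le x z, le z y & z != y])
            mob_fuel S le k' x z
      else 0
  end.

Definition moebius (T : finType) (S : {pred T}) (le : rel T) (x y : T) : int :=
  mob_fuel S le #|T| x y.

Definition muNC (n : nat) (pi : {set {set 'I_n}}) : int :=
  moebius (@NC n) (@refines n) pi (@one_part n).

Section DirectProduct.
Variables (R : realType) (N : nat).
Local Notation C := (R[i]).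
Variable Aj : 'I_N -> algType C.
Variable phi : forall j, {scalar Aj j}.

Definition prodA := forall j : 'I_N, Aj j.
Definition DN := 'I_N -> C.

Definition addA (x y : prodA) : prodA := fun j => x j + y j.
Definition mulA (x y : prodA) : prodA := fun j => x j * y j.
Definition scaleA (c : C) (x : prodA) : prodA := fun j => c *: x j.
Definition embedD (d : DN) : prodA := fun j => d j *: 1.
Definition Eexp (x : prodA) : DN := fun j => phi j (x j).

Definition blockprod (n : nat) (y : 'I_n -> prodA) (V : {set 'I_n}) : prodA :=
  fun j => \prod_(l < n | l \in V) y l j.

(* D_N-valued cumulant
   k_n(y_1..y_n) = sum_{pi in NC(n)} prod_{V in pi} E(prod_{l in V} y_l) mu(pi,1_n);
   the operations in D_N = C^N are componentwise, so we write component j. *)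
Definition cumulant (n : nat) (y : 'I_n -> prodA) : DN :=
  fun j => \sum_(pi in @NC n)
             (\prod_(V in pi) Eexp (blockprod y V) j) * (muNC pi)%:~R.

Definition gen_alg (S : prodA -> Prop) (x : prodA) : Prop :=
  forall B : prodA -> Prop,
    (forall s, S s -> B s) ->
    (forall d, B (embedD d)) ->
    (forall u v, B u -> B v -> B (addA u v)) ->
    (forall c u, B u -> B (scaleA c u)) ->
    (forall u v, B u -> B v -> B (mulA u v)) ->
    B x.

Definition free_over_DN (S : 'I_N -> prodA -> Prop) : Prop :=
  forall (n : nat) (idx : 'I_n -> 'I_N) (y : 'I_n -> prodA),
    (forall l, gen_alg (S (idx l)) (y l)) ->
    (exists l l', idx l != idx l') ->
    cumulant y = (fun _ => 0).

Definition coord_subalg (i : 'I_N) (x : prodA) : Prop :=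
  forall j : 'I_N, j != i -> x j = 0.

End DirectProduct.

(* Every entry y_l with idx l <> j lies in the algebra
   generated by A_(idx l)' and D_N, so its j-th coordinate is a scalar c 1;
   mixedness provides such an entry a_k.  With a_k scalar, the moment
   phi_pi(a) is unchanged when k is cut out of its block into a singleton, and
   this "isolation" is the coarsest non-crossing partition below pi having
   {k} as a block (a coreflection onto that subposet).  Moebius inversion on
   the subposet then shows sum_pi phi_pi(a) mu(pi, 1_n) = 0, since 1_n does
   not belong to it when n >= 2. *)

From Pilot Require Import Defs.
From HB Require Import structures.
From mathcomp Require Import all_boot all_order all_algebra.
From mathcomp Require Import reals complex.
From Stdlib Require Import FunctionalExtensionality.
Import GRing.Theory Num.Theory.
Set Implicit Arguments. Unset Strict Implicit. Unset Printing Implicit Defensive.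
Local Open Scope ring_scope.

Section Moebius.
Variables (T : finType) (S : {pred T}) (le : rel T).
Hypothesis le_refl : {in S, forall x, le x x}.
Hypothesis le_anti : {in S &, forall x y, le x y -> le y x -> x = y}.
Hypothesis le_trans : {in S & &, forall x y z, le x y -> le y z -> le x z}.

(* [#|T|] fuel in [moebius] is enough because the recursion from [y] only
   calls strictly lower elements, whose down-sets are strictly smaller. *)
Let height y := #|[pred z in S | le z y]|.

Let height_lt z y :
  z \in S -> y \in S -> le z y -> z != y -> (height z < height y)%N.
Proof.
move=> zS yS lzy zny; apply/proper_card/properP; split.
  apply/subsetP => w; rewrite !inE => /andP[wS lwz].
  by rewrite wS (le_trans wS zS yS).
exists y; first by rewrite inE yS le_refl.
rewrite inE yS /=; apply: contra zny => lyz.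
by rewrite (le_anti zS yS).
Qed.

Let mob_fuelS k x y : (height y <= k)%N ->
  mob_fuel S le k.+1 x y = mob_fuel S le k x y.
Proof.
elim: k x y => [|k IHk] x y hk /=; case: (x == y) => //.
  case: ifP => // /andP[/andP[_ yS] _].
  by move: hk; rewrite leqn0 => /eqP/card0_eq/(_ y); rewrite inE yS le_refl.
case: ifP => // /andP[/andP[xS yS] lxy]; congr (- _).
apply: eq_bigr => z /and4P[zS lxz lzy zny]; apply: IHk.
by rewrite -ltnS (leq_trans (height_lt zS yS lzy zny)).
Qed.

Let mob_fuel_moebius k x y :
  (height y <= k)%N -> mob_fuel S le k x y = moebius S le x y.
Proof.
have stable d : mob_fuel S le (height y + d) x y = mob_fuel S le (height y) x y.
  by elim: d => [|d IHd]; rewrite ?addn0 // addnS mob_fuelS ?leq_addr.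
move=> hk; rewrite /moebius -(subnKC hk).
by rewrite -(subnKC (max_card [pred z in S | le z y])) !stable.
Qed.

Lemma moebius_id x : moebius S le x x = 1.
Proof. by rewrite /moebius; case: #|T| => [|k] /=; rewrite eqxx. Qed.

Lemma moebius_out x z : x \in S -> ~~ le x z -> moebius S le x z = 0.
Proof.
move=> xS nlxz; have nxz : x != z by apply: contraNneq nlxz => <-; rewrite le_refl.
by rewrite /moebius; case: #|T| => [|k] /=; rewrite (negbTE nxz) // (negbTE nlxz) andbF.
Qed.

Lemma moebius_rec x y : x != y -> x \in S -> y \in S -> le x y ->
  moebius S le x y =
  - \sum_(z | [&& z \in S, le x z, le z y & z != y]) moebius S le x z.
Proof.
move=> xny xS yS lxy; rewrite -(@mob_fuel_moebius (height y)) //.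
have : (0 < height y)%N by apply/card_gt0P; exists y; rewrite inE yS le_refl.
case hy : (height y) => [//|m] _ /=; rewrite (negbTE xny) xS yS lxy /=.
congr (- _); apply: eq_bigr => z /and4P[zS _ lzy zny].
by rewrite mob_fuel_moebius // -ltnS -hy height_lt.
Qed.

Lemma moebius_suml x y : x \in S -> y \in S ->
  \sum_(z | [&& z \in S, le x z & le z y]) moebius S le x z = (x == y)%:R.
Proof.
move=> xS yS; have [<-|xny] := eqVneq x y.
  rewrite (big_pred1 x) ?moebius_id // => z /=.
  apply/idP/eqP => [/and3P[zS lxz lzx]|->]; first exact: le_anti.
  by rewrite xS le_refl.
have [lxy|nlxy] := boolP (le x y); last first.
  rewrite big1 // => z /and3P[zS lxz lzy].
  by rewrite (le_trans xS zS yS lxz lzy) in nlxy.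
rewrite (bigD1 y) /=; last by rewrite yS lxy le_refl.
rewrite moebius_rec // addrC (eq_bigl (fun z => [&& z \in S, le x z, le z y & z != y])).
  exact: subrr.
by move=> z; rewrite !andbA.
Qed.

Lemma moebius_inversion (K : pzRingType) (F : T -> K) s : s \in S ->
  \sum_(t | (t \in S) && le t s)
     \sum_(r | (r \in S) && le r t) F r * (moebius S le r t)%:~R = F s.
Proof.
move=> sS; rewrite (exchange_big_dep (fun r => r \in S)) /=; last by move=> ? ? _ /andP[].
rewrite (eq_bigr (fun r => F r * ((r == s)%:R : int)%:~R)) => [|r rS]; last first.
  rewrite -mulr_sumr -rmorph_sum -(moebius_suml rS sS); congr (_ * _%:~R).
  by apply: eq_bigl => t; rewrite rS; case: (t \in S) (le t s) (le r t) => [] [] [].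
rewrite (bigD1 s) //= eqxx mulr1 big1 ?addr0 // => r /andP[_ /negbTE ->].
by rewrite mulr0.
Qed.

End Moebius.

Section MoebiusDual.
Variables (T : finType) (S : {pred T}) (le : rel T).
Hypothesis le_refl : {in S, forall x, le x x}.
Hypothesis le_anti : {in S &, forall x y, le x y -> le y x -> x = y}.
Hypothesis le_trans : {in S & &, forall x y z, le x y -> le y z -> le x z}.

Let ge := [rel x y | le y x].
Let ge_refl : {in S, forall x, ge x x}. Proof. exact: le_refl. Qed.
Let ge_anti : {in S &, forall x y, ge x y -> ge y x -> x = y}.
Proof. by move=> x y xS yS gxy gyx; apply: le_anti. Qed.
Let ge_trans : {in S & &, forall x y z, ge x y -> ge y z -> ge x z}.
Proof. by move=> x y z xS yS zS gxy gyz; apply: (le_trans zS yS xS). Qed.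

(* The Moebius functions of [le] and of its dual are the left and right
   inverses of [zeta] in the incidence algebra, hence coincide. *)
Let zeta x y : int := [&& x \in S, y \in S & le x y]%:R.

Let moebius_zeta x w : x \in S ->
  \sum_z moebius S le x z * zeta z w = (x == w)%:R.
Proof.
move=> xS; have [wS|wS] := boolP (w \in S); last first.
  rewrite big1 => [|z _]; last by rewrite /zeta (negbTE wS) andbF mulr0.
  by case: eqP => // xw; rewrite -xw xS in wS.
rewrite -(moebius_suml le_refl le_anti le_trans xS wS) [RHS]big_mkcond.
apply: eq_bigr => z _; rewrite /zeta wS.
have [lxz|nlxz] := boolP (le x z); last by rewrite moebius_out // mul0r; case: ifP.
by case: (z \in S); case: (le z w); rewrite /= ?mulr1 ?mulr0.
Qed.

Let zeta_moebius_dual z y : y \in S ->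
  \sum_w zeta z w * moebius S ge y w = (z == y)%:R.
Proof.
move=> yS; have [zS|zS] := boolP (z \in S); last first.
  rewrite big1 => [|w _]; last by rewrite /zeta (negbTE zS) mul0r.
  by case: eqP => // zy; rewrite zy yS in zS.
rewrite eq_sym -(moebius_suml (le := ge) ge_refl ge_anti ge_trans yS zS) [RHS]big_mkcond.
apply: eq_bigr => w _; rewrite /zeta zS.
have [gyw|ngyw] := boolP (ge y w); last first.
  by rewrite (moebius_out (le := ge) ge_refl) // mulr0; case: ifP.
move: gyw; rewrite /ge /= => ->.
by case: (w \in S); case: (le z w); rewrite /= ?mul1r ?mul0r.
Qed.

Lemma moebius_dual x y : x \in S -> y \in S ->
  moebius S le x y = moebius S [rel x y | le y x] y x.
Proof.
move=> xS yS.
have -> : moebius S le x y =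
    \sum_z moebius S le x z * \sum_w zeta z w * moebius S ge y w.
  under [RHS]eq_bigr => z _ do rewrite zeta_moebius_dual //.
  rewrite (bigD1 y) //= eqxx mulr1 big1 ?addr0 // => z /negbTE ->.
  by rewrite mulr0.
under eq_bigr => z _ do rewrite mulr_sumr.
rewrite exchange_big /=.
under eq_bigr => w _ do under eq_bigr => z _ do rewrite mulrA.
under eq_bigr => w _ do rewrite -mulr_suml moebius_zeta //.
rewrite (bigD1 x) //= eqxx mul1r big1 ?addr0 // => w.
by rewrite eq_sym => /negbTE ->; rewrite mul0r.
Qed.

Lemma moebius_sumr x y : x \in S -> y \in S ->
  \sum_(z | [&& z \in S, le x z & le z y]) moebius S le z y = (x == y)%:R.
Proof.
move=> xS yS; rewrite (eq_bigr (fun z => moebius S ge y z)); last first.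
  by move=> z /andP[zS _]; rewrite moebius_dual.
rewrite eq_sym -(moebius_suml (le := ge) ge_refl ge_anti ge_trans yS xS).
by apply: eq_bigl => z /=; rewrite [le x z && _]andbC.
Qed.

End MoebiusDual.

Section Coreflection.
Variables (T : finType) (S S' : {pred T}) (le : rel T).
Hypothesis le_refl : {in S, forall x, le x x}.
Hypothesis le_anti : {in S &, forall x y, le x y -> le y x -> x = y}.
Hypothesis le_trans : {in S & &, forall x y z, le x y -> le y z -> le x z}.
Hypothesis sub_S'S : {subset S' <= S}.
Variables (top : T) (p : T -> T).
Hypothesis top_S : top \in S.
Hypothesis le_top : {in S, forall x, le x top}.
Hypothesis top_notin_S' : top \notin S'.
Hypothesis p_S' : {in S, forall x, p x \in S'}.
Hypothesis p_le : {in S, forall x, le (p x) x}.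
Hypothesis p_max : {in S & S', forall x s, le s x -> le s (p x)}.

Let le_refl' : {in S', forall x, le x x}.
Proof. by move=> x /sub_S'S; apply: le_refl. Qed.
Let le_anti' : {in S' &, forall x y, le x y -> le y x -> x = y}.
Proof. by move=> x y /sub_S'S xS /sub_S'S; apply: le_anti. Qed.
Let le_trans' : {in S' & &, forall x y z, le x y -> le y z -> le x z}.
Proof. by move=> x y z /sub_S'S xS /sub_S'S yS /sub_S'S; apply: le_trans. Qed.

(* F factors through p, so it is the zeta transform on S' of its Moebius
   transform g; pairing with mu(., top) then leaves only the term g top,
   which does not exist since top is not in S'. *)
Lemma coreflection_moebius_sum_eq0 (K : pzRingType) (F : T -> K) :
  {in S, forall x, F (p x) = F x} ->
  \sum_(x in S) F x * (moebius S le x top)%:~R = 0.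
Proof.
move=> Fp.
pose g t := \sum_(r | (r \in S') && le r t) F r * (moebius S' le r t)%:~R.
have F_zeta : {in S, forall x, F x = \sum_(t | (t \in S') && le t x) g t}.
  move=> x xS.
  rewrite -Fp // -(moebius_inversion le_refl' le_anti' le_trans' F (p_S' xS)).
  apply: eq_bigl => t; case tS' : (t \in S') => //=.
  apply/idP/idP => [ltp|]; last exact: p_max.
  exact: (le_trans (sub_S'S tS') (sub_S'S (p_S' xS)) xS ltp (p_le xS)).
under eq_bigr => x xS do rewrite F_zeta // mulr_suml.
rewrite (exchange_big_dep (fun t => t \in S')) /=; last by move=> ? ? _ /andP[].
rewrite big1 // => t tS'.
rewrite -mulr_sumr -rmorph_sum (eq_bigl (fun x => [&& x \in S, le t x & le x top])).
  rewrite (moebius_sumr le_refl le_anti le_trans (sub_S'S tS') top_S).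
  by case: eqP => [et|]; [move: top_notin_S'; rewrite -et tS' | rewrite mulr0].
move=> x; rewrite tS' /=; case xS : (x \in S) => //=.
by rewrite le_top // andbT.
Qed.

End Coreflection.

Section SetPartitions.
Variable n : nat.
Implicit Types (P Q : {set {set 'I_n}}) (V W : {set 'I_n}).

Lemma set_partition_block P x :
  is_set_partition P -> exists2 V, V \in P & x \in V.
Proof.
move=> hP; apply/bigcupP.
by rewrite -/(cover P) (cover_partition hP) inE.
Qed.

Lemma set_partition_block_eq P V W x : is_set_partition P ->
  V \in P -> W \in P -> x \in V -> x \in W -> V = W.
Proof.
move=> /partition_trivIset tP VP WP xV xW.
by rewrite -(def_pblock tP VP xV) (def_pblock tP WP xW).
Qed.

Lemma refinesP P Q :
  reflect {in P, forall V, exists2 W, W \in Q & V \subset W} (refines P Q).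
Proof.
apply: (iffP forallP) => [h V VP|h V].
  by have /implyP/(_ VP)/existsP[W /andP[WQ sVW]] := h V; exists W.
apply/implyP => VP; have [W WQ sVW] := h V VP.
by apply/existsP; exists W; rewrite WQ.
Qed.

Lemma refines_refl P : refines P P.
Proof. by apply/refinesP => V VP; exists V. Qed.

Lemma refines_trans P Q R : refines P Q -> refines Q R -> refines P R.
Proof.
move=> /refinesP PQ /refinesP QR; apply/refinesP => V VP.
have [W WQ sVW] := PQ V VP; have [U UR sWU] := QR W WQ.
by exists U => //; apply: subset_trans sWU.
Qed.

Lemma refines_one_part P : refines P (one_part n).
Proof. by apply/refinesP => V _; exists [set: 'I_n]; rewrite ?inE ?subsetT. Qed.

Let refines_sub P Q : is_set_partition P -> refines P Q -> refines Q P ->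
  P \subset Q.
Proof.
move=> hP /refinesP PQ /refinesP QP; apply/subsetP => V VP.
have [W WQ sVW] := PQ V VP; have [V' V'P sWV'] := QP W WQ.
have /set0Pn[x xV] := partition_neq0 hP VP.
have eVV' : V = V'.
  by apply: (set_partition_block_eq hP VP V'P xV); apply/(subsetP sWV')/(subsetP sVW).
suff -> : V = W by [].
by apply/eqP; rewrite eqEsubset sVW eVV'.
Qed.

Lemma refines_anti P Q : is_set_partition P -> is_set_partition Q ->
  refines P Q -> refines Q P -> P = Q.
Proof. by move=> hP hQ PQ QP; apply/eqP; rewrite eqEsubset !refines_sub. Qed.

Lemma noncrossingP P :
  reflect (forall V W (a b c d : 'I_n), V \in P -> W \in P -> V != W ->
             (a < b)%N -> (b < c)%N -> (c < d)%N ->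
             a \in V -> c \in V -> b \in W -> d \in W -> False)
          (noncrossing P).
Proof.
apply: (iffP forallP) => [h V W a b c d VP WP nVW ab bc cd aV cV bW dW|h V].
  move: (h V) => /implyP/(_ VP)/forallP/(_ W)/implyP/(_ WP)/implyP/(_ nVW).
  move=> /forallP/(_ a)/forallP/(_ b)/forallP/(_ c)/forallP/(_ d).
  by rewrite ab bc cd aV cV bW dW.
apply/implyP => VP; apply/forallP => W; apply/implyP => WP; apply/implyP => nVW.
apply/forallP => a; apply/forallP => b; apply/forallP => c; apply/forallP => d.
by apply/negP => /and5P[ab bc cd aV /and3P[cV bW dW]]; apply: (h V W a b c d).
Qed.

Lemma one_part_NC : (0 < n)%N -> one_part n \in @NC n.
Proof.
move=> n_gt0; apply/andP; split.
  apply/and3P; split; rewrite ?cover1 ?trivIset1 // inE eq_sym.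
  by apply/set0Pn; exists (Ordinal n_gt0); rewrite inE.
apply/noncrossingP => V W a b c d; rewrite !inE => /eqP -> /eqP ->.
by rewrite eqxx.
Qed.

(* A block [[set k]] of [P] has empty image, hence the [:\ set0]. *)
Definition isolate (k : 'I_n) P : {set {set 'I_n}} :=
  [set k] |: ([set V :\ k | V in P] :\ set0).

Variable k : 'I_n.

Lemma isolate_singleton P : [set k] \in isolate k P.
Proof. exact: setU11. Qed.

Lemma isolate_partition P : is_set_partition P -> is_set_partition (isolate k P).
Proof.
move=> hP; rewrite /is_set_partition -(setUCr [set k]); apply: partitionU1.
- apply/and3P; split; last by rewrite !inE eqxx.
  + apply/eqP/setP => x; rewrite !inE; apply/bigcupP/idP.
      by move=> [_ /setD1P[_ /imsetP[V _ ->]]]; rewrite in_setD1 => /andP[].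
    move=> nxk; have [V VP xV] := set_partition_block x hP.
    have xVk : x \in V :\ k by rewrite in_setD1 nxk.
    exists (V :\ k) => //; apply/setD1P; split; last exact: imset_f.
    by apply/set0Pn; exists x.
  + apply/trivIsetP => _ _ /setD1P[_ /imsetP[V VP ->]] /setD1P[_ /imsetP[W WP ->]].
    move=> nVWk; have nVW : V != W by apply: contraNneq nVWk => ->.
    apply: disjointW (subsetDl _ _) (subsetDl _ _) _.
    exact: (trivIsetP (partition_trivIset hP)) VP WP nVW.
- by apply/set0Pn; exists k; rewrite inE.
- by rewrite disjoints1 setC11.
Qed.

Lemma isolate_noncrossing P : noncrossing P -> noncrossing (isolate k P).
Proof.
have in_singleton_ordered (a c : 'I_n) :
    (a < c)%N -> a \in [set k] -> c \in [set k] -> False.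
  by rewrite !inE => ac /eqP ak /eqP ck; rewrite ak ck ltnn in ac.
move=> /noncrossingP ncP; apply/noncrossingP.
move=> V' W' a b c d /setU1P[->|/setD1P[_ /imsetP[V VP ->]]].
  by move=> _ _ ab bc _ ak ck _ _; apply: (in_singleton_ordered a c (ltn_trans ab bc)).
move=> /setU1P[->|/setD1P[_ /imsetP[W WP ->]]].
  by move=> _ _ bc cd _ _ bk dk; apply: (in_singleton_ordered b d (ltn_trans bc cd)).
move=> nVWk ab bc cd.
rewrite !in_setD1 => /andP[_ aV] /andP[_ cV] /andP[_ bW] /andP[_ dW].
have nVW : V != W by apply: contraNneq nVWk => ->.
exact: (ncP V W a b c d).
Qed.

Lemma isolate_refines P : is_set_partition P -> refines (isolate k P) P.
Proof.
move=> hP; apply/refinesP => _ /setU1P[->|/setD1P[_ /imsetP[V VP ->]]].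
  by have [B BP kB] := set_partition_block k hP; exists B; rewrite ?sub1set.
by exists V; rewrite ?subsetDl.
Qed.

Lemma refines_isolate P Q : is_set_partition Q -> [set k] \in Q -> refines Q P ->
  refines Q (isolate k P).
Proof.
move=> hQ kQ /refinesP QP; apply/refinesP => V VQ.
have [->|nVk] := eqVneq V [set k]; first by exists [set k]; rewrite ?isolate_singleton.
have [W WP sVW] := QP V VQ.
have kV : k \notin V.
  by apply: contra nVk => kV; rewrite (set_partition_block_eq hQ VQ kQ kV) ?set11.
have sVWk : V \subset W :\ k.
  apply/subsetP => x xV; rewrite in_setD1 (subsetP sVW) // andbT.
  by apply: contraNneq kV => <-.
exists (W :\ k) => //; apply/setU1P; right; apply/setD1P; split; last exact: imset_f.
by apply: subset_neq0 sVWk _; apply: partition_neq0 hQ VQ.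
Qed.

Lemma singleton_notin_one_part : (1 < n)%N -> [set k] \notin one_part n.
Proof.
move=> n_gt1; rewrite inE; apply: contraTN n_gt1 => /eqP/(congr1 (fun V => #|V|)).
by rewrite cards1 cardsT card_ord => <-.
Qed.

Lemma setD1_block_inj P : is_set_partition P -> {in P &, injective (fun V => V :\ k)}.
Proof.
move=> hP V W VP WP /= eVWk; have same_block := set_partition_block_eq hP VP WP.
have /set0Pn[x xV] := partition_neq0 hP VP; have /set0Pn[y yW] := partition_neq0 hP WP.
have [xk|nxk] := eqVneq x k; last first.
  have : x \in W :\ k by rewrite -eVWk in_setD1 nxk.
  by rewrite in_setD1 => /andP[_]; apply: same_block.
have [yk|nyk] := eqVneq y k; first by apply: (same_block k); [rewrite -xk | rewrite -yk].
have : y \in V :\ k by rewrite eVWk in_setD1 nyk.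
by rewrite in_setD1 => /andP[_ yV]; apply: same_block yV yW.
Qed.

End SetPartitions.

Section BlockMoments.
Variables (K : comPzRingType) (A : algType K) (phi : {scalar A}).
Hypothesis phi1 : phi 1 = 1.
Variables (n : nat) (a : 'I_n -> A).

Definition block_moment (V : {set 'I_n}) : K := phi (\prod_(l < n | l \in V) a l).

Definition partition_moment (P : {set {set 'I_n}}) : K :=
  \prod_(V in P) block_moment V.

Definition free_cumulant : K :=
  \sum_(P in @NC n) partition_moment P * (muNC P)%:~R.

Variables (k : 'I_n) (c : K).
Hypothesis ak : a k = c *: 1.

Lemma block_moment_setD1 V :
  block_moment V = (if k \in V then c else 1) * block_moment (V :\ k).
Proof.
pose s l : K := if l == k then c else 1.
pose b l : A := if l == k then 1 else a l.
rewrite /block_moment (eq_bigr (fun l => s l *: b l)) => [|l _]; last first.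
  by rewrite /s /b; case: eqP => [->|_]; rewrite ?ak ?scale1r.
rewrite scaler_prod linearZ; congr (_ * phi _).
  rewrite -big_mkcondr /=; have [kV|kV] := boolP (k \in V).
    by rewrite (big_pred1 k) // => l /=; rewrite andbC; apply: andb_idr => /eqP->.
  by rewrite big_pred0 // => l /=; apply: contraNF kV => /andP[lV /eqP <-].
rewrite big_mkcond [RHS]big_mkcond; apply: eq_bigr => l _.
by rewrite /b in_setD1; case: eqP => [->|_] //=; case: ifP.
Qed.

Lemma block_moment0 : block_moment set0 = 1.
Proof. by rewrite /block_moment big_pred0 ?phi1 // => l; rewrite inE. Qed.

Lemma partition_moment_isolate P : is_set_partition P ->
  partition_moment (isolate k P) = partition_moment P.
Proof.
move=> hP; rewrite /partition_moment big_setU1 /=; last first.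
  rewrite in_setD1 negb_and; apply/orP; right.
  by apply/imsetP => -[V _ /setP/(_ k)]; rewrite !inE eqxx.
have -> : block_moment [set k] = c.
  by rewrite block_moment_setD1 set11 setDv block_moment0 mulr1.
have -> : \prod_(W in [set V :\ k | V in P] :\ set0) block_moment W =
          \prod_(W in [set V :\ k | V in P]) block_moment W.
  rewrite [RHS](bigID (pred1 set0)) /= [X in _ = X * _]big1 ?mul1r.
    by apply: eq_bigl => W; rewrite in_setD1 andbC.
  by move=> W /andP[_ /eqP ->]; apply: block_moment0.
rewrite big_imset /=; last exact: setD1_block_inj.
under [RHS]eq_bigr => V _ do rewrite block_moment_setD1.
rewrite big_split /=; congr (_ * _).
have [B BP kB] := set_partition_block k hP.
rewrite (bigD1 B) //= kB big1 ?mulr1 // => V /andP[VP nVB]; case: ifP => // kV.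
by rewrite (set_partition_block_eq hP VP BP kV kB) eqxx in nVB.
Qed.

Lemma free_cumulant_scalar_eq0 : (1 < n)%N -> free_cumulant = 0.
Proof.
move=> n_gt1; rewrite /free_cumulant.
have NC_refl : {in @NC n, forall P, refines P P} by move=> P _; apply: refines_refl.
have NC_anti : {in @NC n &, forall P Q, refines P Q -> refines Q P -> P = Q}.
  by move=> P Q /andP[hP _] /andP[hQ _]; apply: refines_anti.
have NC_trans : {in @NC n & &, forall P Q R, refines P Q -> refines Q R -> refines P R}.
  by move=> P Q R _ _ _; apply: refines_trans.
pose NCk := [pred P | (P \in @NC n) && ([set k] \in P)].
have NCk_sub : {subset NCk <= @NC n} by move=> P /andP[].
apply: (coreflection_moebius_sum_eq0 NC_refl NC_anti NC_trans NCk_sub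
          (top := one_part n) (p := isolate k)).
- exact: one_part_NC (ltnW n_gt1).
- by move=> P _; apply: refines_one_part.
- by rewrite inE negb_and singleton_notin_one_part ?orbT.
- move=> P /andP[hP ncP]; rewrite inE /= isolate_singleton andbT.
  by rewrite inE /= isolate_partition ?isolate_noncrossing.
- by move=> P /andP[hP _]; apply: isolate_refines.
- by move=> P Q /andP[hP _] /andP[/andP[hQ _] kQ]; apply: refines_isolate.
- by move=> P /andP[hP _]; apply: partition_moment_isolate.
Qed.

End BlockMoments.

Lemma gen_alg_coord_scalar (R : realType) (N : nat) (Aj : 'I_N -> algType R[i])
    (i j : 'I_N) (x : prodA Aj) :
  gen_alg (@coord_subalg R N Aj i) x -> j != i -> exists c, x j = c *: 1.
Proof.
move=> gen_x; move: j.
apply: (gen_x (fun u => forall j, j != i -> exists c, u j = c *: 1)).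
- by move=> s s_i j ji; exists 0; rewrite scale0r s_i.
- by move=> d j _; exists (d j).
- move=> u v hu hv j ji; have [a ua] := hu j ji; have [b vb] := hv j ji.
  by exists (a + b); rewrite /Defs.addA /= ua vb scalerDl.
- move=> c u hu j ji; have [a ua] := hu j ji.
  by exists (c * a); rewrite /Defs.scaleA /= ua scalerA.
- move=> u v hu hv j ji; have [a ua] := hu j ji; have [b vb] := hv j ji.
  by exists (a * b); rewrite /Defs.mulA /= ua vb -scalerAl mul1r scalerA.
Qed.

Unset Implicit Arguments.

Theorem mainTheorem5 (R : realType) (N : nat) (Aj : 'I_N -> algType R[i])
    (phi : forall j, {scalar Aj j})
    (phi1 : forall j, phi j 1 = 1) :
  free_over_DN phi (@coord_subalg R N Aj).
Proof.
move=> n idx y gen_y [l [l' idx_ll']]; apply: functional_extensionality => j.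
have [k idx_k] : exists k, j != idx k.
  by case: (eqVneq j (idx l)) => [->|]; [exists l' | exists l].
have [c y_k] := gen_alg_coord_scalar (gen_y k) idx_k.
have n_gt1 : (1 < n)%N.
  have ll' : l != l' by apply: contraNneq idx_ll' => ->.
  by have := subset_leq_card (subsetT [set l; l']); rewrite cards2 ll' cardsT card_ord.
exact: (free_cumulant_scalar_eq0 (phi1 j) y_k n_gt1).
Qed.
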